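(* There exist an argumentation semantics $\sigma$ whose extensions are maximal conflict-free sets (w.r.t. set inclusion) and argumentation frameworks $AF=(AR,Attacks)$, $AF'=(AR',Attacks')$ with $AF\preceq_N AF'$ such that the following statement does NOT hold: if for all $E\in\sigma(AF)$ there exists $E'\in\sigma(AF')$ with $E'\not\subseteq AR$ or $E'=E$, then for all $E\in\sigma(AF)$ there exists $E'\in\sigma(AF')$ with $E\subseteq E'$.
   Context: An argumentation framework is a pair $(AR,Attacks)$ with $AR$ a finite set and $Attacks\subseteq AR\times AR$; $a$ attacks $b$ iff $(a,b)\in Attacks$. A set $S$ is conflict-free iff no element of $S$ attacks an element of $S$. An argumentation semantics $\sigma$ assigns to each argumentation framework a set $\sigma(AF)$ of subsets of $AR$; ''$\sigma$'s extensions are maximal conflict-free sets'' means that for every $AF$, every $E\in\sigma(AF)$ is a $\subseteq$-maximal conflict-free subset of the argument set of $AF$. $AF\preceq_N AF'$ (normal expansion) iff $AR\subseteq AR'$, $Attacks\subseteq Attacks'$ and no $(a,b)\in Attacks'\setminus Attacks$ has both $a,b\in AR$. *)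

From mathcomp Require Import all_boot finmap.
Set Implicit Arguments. Unset Strict Implicit. Unset Printing Implicit Defensive.
Local Open Scope fset_scope.

Record AF := mkAF {
  AR : {fset nat};
  Attacks : {fset (nat * nat)};
  Attacks_wf : forall a b, (a, b) \in Attacks -> (a \in AR) && (b \in AR)
}.

Definition attacks (F : AF) (a b : nat) : Prop := (a, b) \in Attacks F.

Definition conflict_free (F : AF) (S : {fset nat}) : Prop :=
  forall a b, a \in S -> b \in S -> ~ attacks F a b.

Definition maximal_conflict_free (F : AF) (S : {fset nat}) : Prop :=
  S `<=` AR F /\ conflict_free F S /\
  forall T : {fset nat}, S `<=` T -> T `<=` AR F -> conflict_free F T -> T = S.

Definition semantics := AF -> {fset nat} -> Prop.

Definition extensions_max_cf (sigma : semantics) : Prop :=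
  forall (F : AF) (E : {fset nat}), sigma F E -> maximal_conflict_free F E.

Definition normal_expansion (F F' : AF) : Prop :=
  AR F `<=` AR F' /\ Attacks F `<=` Attacks F' /\
  forall a b, (a, b) \in Attacks F' -> (a, b) \notin Attacks F ->
    ~ (a \in AR F /\ b \in AR F).

(* Take σ to be the stage semantics, whose extensions are conflict-free sets of
   ⊆-maximal range and hence maximal conflict-free sets.  Let AF have a single
   argument 1 and expand it normally by a new argument 2 attacking 1.  Then
   {2} is stable in AF', so every stage extension of AF' is stable, hence
   contains the unattacked 2 and not 1.  The hypothesis of the implication
   holds because {2} leaves AR, but the extension {1} of AF is not contained in
   any extension of AF'. *)
From mathcomp Require Import all_boot finmap.
Set Implicit Arguments. Unset Strict Implicit. Unset Printing Implicit Defensive.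
Local Open Scope fset_scope.

Definition in_range (F : AF) (S : {fset nat}) (b : nat) : Prop :=
  b \in S \/ exists2 a, a \in S & attacks F a b.

Definition stable (F : AF) (S : {fset nat}) : Prop :=
  S `<=` AR F /\ conflict_free F S /\ forall b, b \in AR F -> in_range F S b.

Definition stage : semantics := fun F S =>
  S `<=` AR F /\ conflict_free F S /\
  forall T, T `<=` AR F -> conflict_free F T ->
    (forall b, in_range F S b -> in_range F T b) ->
    (forall b, in_range F T b -> in_range F S b).

Lemma in_range_subset (F : AF) (S T : {fset nat}) (b : nat) :
  S `<=` T -> in_range F S b -> in_range F T b.
Proof.
move=> /fsubsetP sST [bS | [a aS Fab]]; first by left; apply: sST.
by right; exists a => //; apply: sST.
Qed.

Lemma in_range_AR (F : AF) (S : {fset nat}) (b : nat) :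
  S `<=` AR F -> in_range F S b -> b \in AR F.
Proof.
move=> /fsubsetP sSAR [bS | [a _ Fab]]; first exact: sSAR.
by case/andP: (Attacks_wf Fab).
Qed.

Lemma stage_maximal_conflict_free : extensions_max_cf stage.
Proof.
move=> F S [sSAR [cfS maxS]]; do 2!split=> //.
move=> T sST sTAR cfT; apply/eqP; rewrite eqEfsubset sST andbT.
apply/fsubsetP => t tT.
have [//|[a aS Fat]] :=
  maxS T sTAR cfT (fun b => in_range_subset sST) t (or_introl tT).
by case: (cfT a t (fsubsetP sST a aS) tT).
Qed.

Lemma stable_stage (F : AF) (S : {fset nat}) : stable F S -> stage F S.
Proof.
move=> [sSAR [cfS fullS]]; do 2!split=> //.
by move=> T sTAR _ _ b /(in_range_AR sTAR) /fullS.
Qed.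

Lemma stage_stable (F : AF) (S E : {fset nat}) :
  stable F S -> stage F E -> stable F E.
Proof.
move=> [sSAR [cfS fullS]] [sEAR [cfE maxE]]; do 2!split=> //.
move=> b bAR; apply: (maxE S sSAR cfS) (fullS b bAR).
by move=> c /(in_range_AR sEAR) /fullS.
Qed.

Lemma stable_unattacked (F : AF) (S : {fset nat}) (a : nat) :
  stable F S -> a \in AR F -> (forall c, ~ attacks F c a) -> a \in S.
Proof. by move=> [_ [_ fullS]] /fullS [//|[c _ /[swap] /[apply]]]. Qed.

Lemma attacks_wf_none : forall a b,
  (a, b) \in (fset0 : {fset nat * nat}) -> (a \in [fset 1]) && (b \in [fset 1]).
Proof. by move=> a b; rewrite in_fset0. Qed.

Lemma attacks_wf_2_1 : forall a b,
  (a, b) \in [fset (2, 1)] -> (a \in [fset 1; 2]) && (b \in [fset 1; 2]).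
Proof. by move=> a b; rewrite !inE => /eqP [-> ->]. Qed.

Definition AF_1 : AF := mkAF attacks_wf_none.
Definition AF_2_attacks_1 : AF := mkAF attacks_wf_2_1.

Lemma normal_expansion_AF_1 : normal_expansion AF_1 AF_2_attacks_1.
Proof.
split; first by apply/fsubsetP => x; rewrite !inE => ->.
split; first exact: fsub0set.
by move=> a b; rewrite /= !inE => /eqP [-> ->] _ [].
Qed.

Lemma stage_AF_1 : stage AF_1 [fset 1].
Proof.
apply: stable_stage; split; first exact: fsubset_refl.
split; first by move=> a b _ _; rewrite /attacks in_fset0.
by move=> b bAR; left.
Qed.

Lemma stable_AF_2_attacks_1 : stable AF_2_attacks_1 [fset 2].
Proof.
split; first by apply/fsubsetP => x; rewrite !inE => ->; rewrite orbT.
split; first by move=> a b; rewrite /attacks !inE => /eqP -> /eqP ->.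
move=> b; rewrite !inE => /orP [/eqP -> | bS]; last by left; rewrite inE.
by right; exists 2; rewrite /attacks !inE.
Qed.

Lemma stage_AF_2_attacks_1 (E : {fset nat}) :
  stage AF_2_attacks_1 E -> 1 \notin E.
Proof.
move=> stE; have stabE := stage_stable stable_AF_2_attacks_1 stE.
have E2 : 2 \in E.
  apply: (stable_unattacked stabE); first by rewrite !inE orbT.
  by move=> c; rewrite /attacks inE => /eqP [].
apply/negP => E1; case: stabE => _ [cfE _].
by apply: (cfE 2 1) => //; rewrite /attacks inE.
Qed.

Theorem proposition27 :
  exists sigma : semantics,
    extensions_max_cf sigma /\
    exists F F' : AF,
      normal_expansion F F' /\
      ~ ((forall E, sigma F E ->
            exists E', sigma F' E' /\ (~ (E' `<=` AR F) \/ E' = E)) ->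
         (forall E, sigma F E -> exists E', sigma F' E' /\ E `<=` E')).
Proof.
exists stage; split; first exact: stage_maximal_conflict_free.
exists AF_1, AF_2_attacks_1; split; first exact: normal_expansion_AF_1.
move=> implication.
have [E' [stE' sub1E']] : exists E', stage AF_2_attacks_1 E' /\ [fset 1] `<=` E'.
  apply: implication stage_AF_1 => E _.
  exists [fset 2]; split; first exact: stable_stage stable_AF_2_attacks_1.
  by left => /fsubsetP /(_ 2); rewrite !inE => /(_ erefl).
move/negP: (stage_AF_2_attacks_1 stE'); apply.
by apply: (fsubsetP sub1E'); rewrite inE.
Qed.
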